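(* Let $c$ be a prefix equivariant statistic and $\theta>0$. Let $2\le k\le N$. If the increasing prefix $e_k=12\cdots k$ is negative, then the increasing prefix $e_{k-1}=12\cdots(k-1)$ is negative.
   Context: Permutations of $\{1,\dots,m\}$ are written in one-line notation; $\mathfrak S_m$ is the set of all of them. Fix $N\ge1$, a statistic $c:\bigcup_{m=1}^N\mathfrak S_m\to\mathbb Z_{\ge0}$ and a real $\theta>0$. Prefixes and containment: - A prefix is an element of $\bigcup_{m=1}^N\mathfrak S_m$. - $\pi^{(i)}\in\mathfrak S_i$ denotes the unique permutation with the same relative order as $\pi_1,\dots,\pi_i$. - A prefix $r\in\mathfrak S_n$ contains $p\in\mathfrak S_m$ if $r^{(m)}=p$. - For $p\in\mathfrak S_m$ and $\pi\in\mathfrak S_N$: $\pi$ is $p$-prefixed if $\pi^{(m)}=p$, and $p$-winnable if moreover $\pi_m=N$. Probabilities: - $D(p)=\sum_{p\text{-prefixed }\pi}\theta^{c(\pi)}$. - $S(p)=\big(\sum_{p\text{-winnable }\pi}\theta^{c(\pi)}\big)/D(p)$. - $S^c(p)=0$ for $p\in\mathfrak S_N$; for $p\in\mathfrak S_m$ with $m<N$, $S^c(p)=\big(\sum_{q'\in\mathfrak S_{m+1}\text{ containing }p}D(q')\bar S(q')\big)/D(p)$. - $\bar S(p)=\max(S(p),S^c(p))$. - $p$ is positive if $S(p)\ge S^c(p)$, and negative otherwise. Let $e_k=12\cdots k$. For $q\in\mathfrak S_k$ and $\pi\in\mathfrak S_m$ with $\pi_1<\cdots<\pi_k$, $\sigma_q\cdot\pi$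 is given by $(\sigma_q\cdot\pi)_i=\pi_{q_i}$ for $i\le k$ and $(\sigma_q\cdot\pi)_i=\pi_i$ for $i>k$. The statistic $c$ is prefix equivariant if $c(\pi)-c(\sigma_q\cdot\pi)=c(e_k)-c(q)$ for all $k\le m\le N$, all $q\in\mathfrak S_k$, and all $\pi\in\mathfrak S_m$ with $\pi_1<\cdots<\pi_k$. *)

From HB Require Import structures.
From mathcomp Require Import all_boot all_order all_algebra all_fingroup.
Set Implicit Arguments. Unset Strict Implicit. Unset Printing Implicit Defensive.
Import Order.TTheory GRing.Theory Num.Theory.

(* Conventions: a permutation of {1..m} in one-line notation is an element
   p : 'S_m (permutation of 'I_m = {0..m-1}); the paper's p_i is
   (pval p (i-1)) + 1, i.e. everything is shifted down by one. *)

(* value of p at position i (0-based); 0 outside the range *)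
Definition pval (m : nat) (p : 'S_m) (i : nat) : nat :=
  match @insub nat (fun j => j < m) 'I_m i with
  | Some j => val (p j)
  | None => 0
  end.

Definition contains (n : nat) (r : 'S_n) (m : nat) (p : 'S_m) : bool :=
  (m <= n) &&
  [forall a : 'I_m, forall b : 'I_m,
     (pval r a < pval r b) == (pval p a < pval p b)].

Definition winnable (N : nat) (pi : 'S_N) (m : nat) (p : 'S_m) : bool :=
  contains pi p && (pval pi m.-1 == N.-1).

Section Probabilities.
Variable R : realFieldType.
Variable N : nat.
Variable c : forall m : nat, 'S_m -> nat.
Variable theta : R.

Local Open Scope ring_scope.

Definition Dw (m : nat) (p : 'S_m) : R :=
  \sum_(pi : 'S_N | contains pi p) theta ^+ (c pi).

Definition Sw (m : nat) (p : 'S_m) : R :=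
  (\sum_(pi : 'S_N | winnable pi p) theta ^+ (c pi)) / Dw p.

(* Sbar computed with fuel; the fuel N - m suffices (see Sbar below). *)
Fixpoint Sbar_f (fuel : nat) (m : nat) (p : 'S_m) {struct fuel} : R :=
  match fuel with
  | 0 => Num.max (Sw p) 0
  | f.+1 =>
      Num.max (Sw p)
        (if (m < N)%N then
           (\sum_(q : 'S_m.+1 | contains q p) Dw q * Sbar_f f q) / Dw p
         else 0)
  end.

Definition Sc (m : nat) (p : 'S_m) : R :=
  if (m < N)%N then
    (\sum_(q : 'S_m.+1 | contains q p) Dw q * Sbar_f (N - m.+1) q) / Dw p
  else 0.

Definition Sbar (m : nat) (p : 'S_m) : R := Num.max (Sw p) (Sc p).

Definition positive (m : nat) (p : 'S_m) : bool := Sc p <= Sw p.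
Definition negative (m : nat) (p : 'S_m) : bool := Sw p < Sc p.

End Probabilities.

(* prefix equivariance: for k <= m <= N, q in S_k, pi in S_m with
   pi_1 < ... < pi_k, and pi' = sigma_q . pi, we have
   c(pi) - c(pi') = c(e_k) - c(q). sigma_q . pi is specified by its values. *)
Definition prefix_equivariant (N : nat) (c : forall m : nat, 'S_m -> nat) : Prop :=
  forall (k m : nat) (q : 'S_k) (pi pi' : 'S_m),
    (1 <= k)%N -> (k <= m)%N -> (m <= N)%N ->
    (forall i j : nat, (i < j)%N -> (j < k)%N -> (pval pi i < pval pi j)%N) ->
    (forall i : nat, pval pi' i =
        (if (i < k)%N then pval pi (pval q i) else pval pi i)) ->
    ((c m pi)%:Z - (c m pi')%:Z = (c k 1%g)%:Z - (c k q)%:Z)%R.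

From Pilot Require Import Defs.
From HB Require Import structures.
From mathcomp Require Import all_boot all_order all_algebra all_fingroup.
From mathcomp Require Import zify.
Import Order.TTheory GRing.Theory Num.Theory.
Set Implicit Arguments. Unset Strict Implicit. Unset Printing Implicit Defensive.

(* Prefix equivariance lets sigma_q, for q in S_k, act on prefixes whose first k entries
   increase: it rescales D by theta^(c(q) - c(e_k)) and leaves S, S^c and Sbar unchanged.
   Let P be the set of q in S_k that extend e_(k-1) and have q_(k-1) = k, and put
   T = sum_(q in P) theta^c(q).  Each q in P equals sigma_q . e_k, and the k-prefix of a
   permutation winnable for e_(k-1) lies in P; since sigma_q sends the winning position k-1
   of q to position k of e_k,
     theta^c(e_k) D(e_(k-1)) S(e_(k-1)) <= T D(e_k) S(e_k).
   If e_k is negative then, as S^c(q) = S^c(e_k) <= Sbar(q) for q in P,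
     T D(e_k) S(e_k) < T D(e_k) S^c(e_k) = theta^c(e_k) sum_(q in P) D(q) S^c(q)
                     <= theta^c(e_k) D(e_(k-1)) S^c(e_(k-1)). *)

(* perm.v also exports a [pval]. *)
Notation pval := Defs.pval.

Lemma pvalE m (p : 'S_m) (i : 'I_m) : pval p i = p i.
Proof. by rewrite /pval valK. Qed.

Lemma pval_ord m (p : 'S_m) i (hi : i < m) : pval p i = p (Ordinal hi).
Proof. exact: (pvalE p (Ordinal hi)). Qed.

Lemma pval_out m (p : 'S_m) i : m <= i -> pval p i = 0.
Proof. by move=> hi; rewrite /pval insubN // -leqNgt. Qed.

Lemma pval_lt m (p : 'S_m) i : i < m -> pval p i < m.
Proof. by move=> hi; rewrite (pval_ord p hi). Qed.

Lemma pval_inj m (p : 'S_m) i j : i < m -> j < m -> pval p i = pval p j -> i = j.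
Proof. by move=> hi hj; rewrite (pval_ord p hi) (pval_ord p hj) => /val_inj/perm_inj[]. Qed.

Lemma eq_perm_pval m (p q : 'S_m) : (forall i, i < m -> pval p i = pval q i) -> p = q.
Proof. by move=> H; apply/permP => i; apply: val_inj; have := H i (ltn_ord i); rewrite !pvalE. Qed.

Lemma pval1 m i : i < m -> pval (1 : 'S_m)%g i = i.
Proof. by move=> hi; rewrite (pval_ord _ hi) perm1. Qed.

Lemma containsP n (r : 'S_n) m (p : 'S_m) :
  reflect (m <= n /\ forall i j, i < m -> j < m ->
             (pval r i < pval r j) = (pval p i < pval p j))
          (contains r p).
Proof.
apply: (iffP andP) => -[hmn H]; split=> //.
- by move=> i j hi hj; have /forallP/(_ (Ordinal hj))/eqP := forallP H (Ordinal hi).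
- by apply/forallP => a; apply/forallP => b; apply/eqP; apply: H.
Qed.

Lemma contains_shorter n (r : 'S_n) m (q : 'S_m) l (p : 'S_l) :
  l <= m -> contains r q -> contains r p -> contains q p.
Proof.
move=> hlm /containsP[hmn Hq] /containsP[hln Hp]; apply/containsP; split=> //.
by move=> i j hi hj; rewrite -Hq ?Hp ?(leq_trans hi hlm) ?(leq_trans hj hlm).
Qed.

Lemma contains1 n m : m <= n -> contains (1 : 'S_n)%g (1 : 'S_m)%g.
Proof.
move=> hmn; apply/containsP; split=> // i j hi hj.
by rewrite !pval1 ?(leq_trans hi hmn) ?(leq_trans hj hmn).
Qed.

Definition incr_prefix k m (r : 'S_m) :=
  forall i j, i < j -> j < k -> pval r i < pval r j.

Lemma incr_prefix_contains k n (a : 'S_n) m (r : 'S_m) :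
  k <= m -> contains a r -> incr_prefix k r -> incr_prefix k a.
Proof.
move=> hkm /containsP[_ H] Hr i j hij hjk.
have hj : j < m := leq_trans hjk hkm.
by rewrite H ?Hr ?(ltn_trans hij hj).
Qed.

Lemma incr_prefix1 k m : k <= m -> incr_prefix k (1 : 'S_m)%g.
Proof.
move=> hkm i j hij hjk; have hj : j < m := leq_trans hjk hkm.
by rewrite !pval1 ?(ltn_trans hij hj).
Qed.

Lemma perm_max_val n (p : 'S_n) (j : 'I_n) :
  (forall i, i != j -> p i < p j) -> p j = n.-1 :> nat.
Proof.
move=> hmax; have hn : n.-1 < n by rewrite ltn_predL (leq_ltn_trans _ (ltn_ord j)).
set i := p^-1%g (Ordinal hn).
have p_i : p i = n.-1 :> nat by rewrite permKV.
have [<- //|hij] := eqVneq i j.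
by have := hmax i hij; have := ltn_ord (p j); rewrite p_i; lia.
Qed.

Lemma pattern_max n (pi : 'S_n) k (q : 'S_k) j :
  contains pi q -> j < k -> pval pi j = n.-1 -> pval q j = k.-1.
Proof.
move=> /containsP[hkn Hq] hjk pi_j.
rewrite (pval_ord _ hjk); apply: perm_max_val => i hij.
have hin : i < n := leq_trans (ltn_ord i) hkn.
have pi_i : pval pi i != n.-1.
  apply: contra hij; rewrite -pi_j => /eqP/(pval_inj hin (leq_trans hjk hkn)) e.
  exact/eqP/val_inj.
by rewrite -!pvalE /= -Hq // pi_j; have := pval_lt pi hin; lia.
Qed.

Definition rank n (p : 'S_n) k (i : 'I_k) : nat :=
  #|[pred j : 'I_k | pval p j < pval p i]|.

Lemma rank_lt n (p : 'S_n) k (i : 'I_k) : rank p i < k.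
Proof.
apply: (@leq_ltn_trans #|predC1 i|).
  apply: subset_leq_card; apply/subsetP => j; rewrite !inE.
  by apply: contraTneq => ->; rewrite ltnn.
by rewrite cardC1 card_ord; case: k i => [[]|].
Qed.

Lemma rank_mono n (p : 'S_n) k (a b : 'I_k) :
  pval p a < pval p b -> rank p a < rank p b.
Proof.
move=> hab; apply: proper_card; apply/properP; split.
  by apply/subsetP => j; rewrite !inE => /ltn_trans; apply.
by exists a; rewrite !inE ?ltnn.
Qed.

Lemma rank_cmp n (p : 'S_n) k (a b : 'I_k) : k <= n ->
  (rank p a < rank p b) = (pval p a < pval p b).
Proof.
move=> hkn; case: (ltngtP (pval p a) (pval p b)) => h.
- exact: rank_mono.
- by apply/negbTE; rewrite -leqNgt ltnW // rank_mono.
- by rewrite (val_inj (pval_inj (leq_trans (ltn_ord a) hkn) (leq_trans (ltn_ord b) hkn) h)) ltnn.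
Qed.

Lemma rank_inj n (p : 'S_n) k : k <= n ->
  injective (fun i : 'I_k => Ordinal (rank_lt p i)).
Proof.
move=> hkn a b [e].
apply/val_inj/(@pval_inj _ p _ _ (leq_trans (ltn_ord a) hkn) (leq_trans (ltn_ord b) hkn)).
by apply/eqP; rewrite eqn_leq leqNgt -rank_cmp // e ltnn leqNgt -rank_cmp // e ltnn.
Qed.

Lemma pattern_exists n (p : 'S_n) k : k <= n -> exists q : 'S_k, contains p q.
Proof.
move=> hkn; exists (perm (@rank_inj n p k hkn)); apply/containsP; split=> // i j hi hj.
by rewrite (pval_ord _ hi) (pval_ord _ hj) !permE /= rank_cmp.
Qed.

(* [sigma q r] below is the paper's sigma_q . r; [sigma_pos q] is its action on positions. *)
Definition sigma_pos k (q : 'S_k) i := if i < k then pval q i else i.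

Lemma sigma_pos_lt k (q : 'S_k) m i : k <= m -> i < m -> sigma_pos q i < m.
Proof.
move=> hkm him; rewrite /sigma_pos; case: ifP => // hik.
exact: leq_trans (pval_lt q hik) hkm.
Qed.

Lemma sigma_pos_inj k (q : 'S_k) : injective (sigma_pos q).
Proof.
move=> i j; rewrite /sigma_pos; case: ifP => hi; case: ifP => hj //.
- exact: pval_inj.
- by move=> e; have := pval_lt q hi; rewrite e hj.
- by move=> e; have := pval_lt q hj; rewrite -e hi.
Qed.

Definition sigma_fun k (q : 'S_k) m (i : 'I_m) : 'I_m :=
  if k <= m then insubd i (sigma_pos q i) else i.

Lemma sigma_fun_inj k (q : 'S_k) m : injective (@sigma_fun k q m).
Proof.
move=> a b; rewrite /sigma_fun; case: ifP => hkm // /(congr1 val).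
by rewrite !val_insubd !sigma_pos_lt // => /sigma_pos_inj/val_inj.
Qed.

Definition sigma_perm k (q : 'S_k) m : 'S_m := perm (@sigma_fun_inj k q m).

Lemma sigma_permE k (q : 'S_k) m (i : 'I_m) :
  k <= m -> sigma_perm q m i = sigma_pos q i :> nat.
Proof. by move=> hkm; rewrite permE /sigma_fun hkm val_insubd sigma_pos_lt. Qed.

Definition sigma k (q : 'S_k) m (r : 'S_m) : 'S_m := (sigma_perm q m * r)%g.

Lemma sigma_inj k (q : 'S_k) m : injective (@sigma k q m).
Proof. exact: mulgI. Qed.

Lemma pval_sigma k (q : 'S_k) m (r : 'S_m) i :
  k <= m -> pval (sigma q r) i = pval r (sigma_pos q i).
Proof.
move=> hkm; case: (ltnP i m) => him.
  by rewrite (pval_ord _ him) permM -pvalE sigma_permE.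
rewrite !pval_out // /sigma_pos; case: ifP => // hik.
by move: (leq_trans hkm him); rewrite leqNgt hik.
Qed.

Lemma sigma1 k (q : 'S_k) : sigma q (1 : 'S_k)%g = q.
Proof.
apply: eq_perm_pval => i hi.
by rewrite pval_sigma // pval1 ?sigma_pos_lt // /sigma_pos hi.
Qed.

Lemma sigma_pos_onto k (q : 'S_k) m i :
  k <= m -> i < m -> exists2 j, j < m & sigma_pos q j = i.
Proof.
move=> hkm him; exists ((sigma_perm q m)^-1%g (Ordinal him)) => //.
by rewrite -sigma_permE // permKV.
Qed.

Lemma contains_sigma k (q : 'S_k) n (a : 'S_n) m (b : 'S_m) :
  k <= m -> contains (sigma q a) (sigma q b) = contains a b.
Proof.
move=> hkm; apply/containsP/containsP => -[hmn H]; split=> // i j hi hj.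
  have [i' hi' <-] := sigma_pos_onto q hkm hi.
  have [j' hj' <-] := sigma_pos_onto q hkm hj.
  by rewrite -!pval_sigma ?H ?(leq_trans hkm hmn).
by rewrite !pval_sigma ?H ?sigma_pos_lt ?(leq_trans hkm hmn).
Qed.

Lemma pval_tperm_last K i : i < K.+1 ->
  pval (tperm (inord K) (inord K.+1) : 'S_K.+2) i = if i == K then K.+1 else i.
Proof.
move=> hi; have hi2 : i < K.+2 := ltnW hi.
rewrite (pval_ord _ hi2) (_ : Ordinal hi2 = inord i); last by apply: val_inj; rewrite /= inordK.
have [->|iK] := eqVneq i K; first by rewrite tpermL inordK.
by rewrite tpermD ?inordK //; rewrite -(inj_eq val_inj) /= !inordK //; lia.
Qed.

Definition penult_max K (q : 'S_K.+2) : bool :=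
  contains q (1 : 'S_K.+1)%g && (pval q K == K.+1).

Lemma penult_max_tperm K : penult_max (tperm (inord K) (inord K.+1) : 'S_K.+2).
Proof.
rewrite /penult_max pval_tperm_last // eqxx /= eqxx andbT.
apply/containsP; split=> // i j hi hj; rewrite !pval_tperm_last // !pval1 //.
by case: eqP => ei; case: eqP => ej; subst => //; lia.
Qed.

Lemma penult_max_pattern n (pi : 'S_n) K (q : 'S_K.+2) :
  contains pi (1 : 'S_K.+1)%g -> pval pi K = n.-1 -> contains pi q -> penult_max q.
Proof.
move=> pi_e' pi_K pi_q; rewrite /penult_max (contains_shorter _ pi_q pi_e') //=.
by rewrite (pattern_max pi_q _ pi_K).
Qed.

Local Open Scope ring_scope.

Lemma eq_div_scale (F : fieldType) (a b x y x' y' : F) :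
  a != 0 -> b != 0 -> a * x' = b * x -> a * y' = b * y -> x' / y' = x / y.
Proof.
move=> ha hb hx hy.
by rewrite -[x' / y']mul1r -(divff ha) mulf_div hx hy -mulf_div divff // mul1r.
Qed.

Section Equivariance.
Variables (R : realFieldType) (N : nat) (c : forall m : nat, 'S_m -> nat) (theta : R).
Hypotheses (c_equiv : prefix_equivariant N c) (theta_gt0 : 0 < theta).

Local Notation D := (Dw N c theta).
Local Notation Sw := (Defs.Sw N c theta).
Local Notation Sc := (Defs.Sc N c theta).
Local Notation Sbar_f := (Defs.Sbar_f N c theta).

Lemma weight_ge0 n : 0 <= theta ^+ n.
Proof. exact/exprn_ge0/ltW. Qed.

Lemma weight_neq0 n : theta ^+ n != 0.
Proof. exact/expf_neq0/lt0r_neq0. Qed.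

Lemma weight_sigma k (q : 'S_k) (rho : 'S_N) :
  (0 < k)%N -> (k <= N)%N -> incr_prefix k rho ->
  theta ^+ c (1 : 'S_k)%g * theta ^+ c (sigma q rho) = theta ^+ c q * theta ^+ c rho.
Proof.
move=> hk hkN hrho; rewrite -!exprD; congr (_ ^+ _).
have pval_sigma_rho i : pval (sigma q rho) i =
    (if (i < k)%N then pval rho (pval q i) else pval rho i).
  by rewrite pval_sigma // /sigma_pos; case: ifP.
have := c_equiv hk hkN (leqnn N) hrho pval_sigma_rho; lia.
Qed.

Definition Dmax m (p : 'S_m) j : R :=
  \sum_(pi : 'S_N | contains pi p && (pval pi j == N.-1)) theta ^+ c pi.

Lemma Sw_Dmax m (p : 'S_m) : Sw p = Dmax p m.-1 / D p.
Proof. by []. Qed.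

Lemma Dw_sigma k (q : 'S_k) m (r : 'S_m) :
  (0 < k)%N -> (k <= m)%N -> (k <= N)%N -> incr_prefix k r ->
  theta ^+ c (1 : 'S_k)%g * D (sigma q r) = theta ^+ c q * D r.
Proof.
move=> hk hkm hkN hr; rewrite /Dw !mulr_sumr (reindex_inj (@sigma_inj k q N)) /=.
apply: eq_big => [pi|pi]; rewrite contains_sigma // => pi_r.
exact/weight_sigma/(incr_prefix_contains hkm pi_r).
Qed.

Lemma Dmax_sigma k (q : 'S_k) m (r : 'S_m) j :
  (0 < k)%N -> (k <= m)%N -> (k <= N)%N -> incr_prefix k r ->
  theta ^+ c (1 : 'S_k)%g * Dmax (sigma q r) j = theta ^+ c q * Dmax r (sigma_pos q j).
Proof.
move=> hk hkm hkN hr; rewrite /Dmax !mulr_sumr (reindex_inj (@sigma_inj k q N)) /=.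
apply: eq_big => [pi|pi]; rewrite contains_sigma ?pval_sigma // => /andP[pi_r _].
exact/weight_sigma/(incr_prefix_contains hkm pi_r).
Qed.

Lemma sum_sigma k (q : 'S_k) m (r : 'S_m) (F : 'S_m.+1 -> R) :
  (0 < k)%N -> (k <= m)%N -> (k <= N)%N -> incr_prefix k r ->
  (forall x, contains x r -> F (sigma q x) = F x) ->
  theta ^+ c (1 : 'S_k)%g * \sum_(x : 'S_m.+1 | contains x (sigma q r)) D x * F x =
  theta ^+ c q * \sum_(x : 'S_m.+1 | contains x r) D x * F x.
Proof.
move=> hk hkm hkN hr hF; have hkm1 := leqW hkm.
rewrite !mulr_sumr (reindex_inj (@sigma_inj k q m.+1)) /=.
apply: eq_big => [x|x]; rewrite contains_sigma // => x_r.
rewrite hF // !mulrA Dw_sigma //; exact: incr_prefix_contains hkm x_r hr.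
Qed.

Lemma Sw_sigma k (q : 'S_k) m (r : 'S_m) :
  (0 < k)%N -> (k < m)%N -> (k <= N)%N -> incr_prefix k r ->
  Sw (sigma q r) = Sw r.
Proof.
move=> hk hkm hkN hr; rewrite !Sw_Dmax.
apply: (eq_div_scale (weight_neq0 _) (weight_neq0 _)); last exact: Dw_sigma (ltnW hkm) _ hr.
rewrite Dmax_sigma ?(ltnW hkm) //; congr (_ * Dmax _ _).
by rewrite /sigma_pos ifN // -leqNgt; lia.
Qed.

Lemma Sbar_f_sigma k (q : 'S_k) f :
  (0 < k)%N -> (k <= N)%N ->
  forall m (r : 'S_m), (k < m)%N -> incr_prefix k r -> Sbar_f f (sigma q r) = Sbar_f f r.
Proof.
move=> hk hkN; elim: f => [|f IH] m r hkm hr /=; rewrite Sw_sigma //.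
case: ifP => // _; congr (Num.max _ _).
apply: (eq_div_scale (weight_neq0 _) (weight_neq0 _)); last exact: Dw_sigma (ltnW hkm) _ hr.
apply: sum_sigma => //; first exact: ltnW.
by move=> x x_r; apply: IH (leqW hkm) (incr_prefix_contains (ltnW hkm) x_r hr).
Qed.

Lemma Sc_sigma k (q : 'S_k) m (r : 'S_m) :
  (0 < k)%N -> (k <= m)%N -> (k <= N)%N -> incr_prefix k r ->
  Sc (sigma q r) = Sc r.
Proof.
move=> hk hkm hkN hr; rewrite /Defs.Sc; case: ifP => // _.
apply: (eq_div_scale (weight_neq0 _) (weight_neq0 _)); last exact: Dw_sigma hkm _ hr.
apply: sum_sigma => // x x_r.
by apply: Sbar_f_sigma => //; apply: incr_prefix_contains hkm x_r hr.
Qed.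

Lemma Dw_ge0 m (p : 'S_m) : 0 <= D p.
Proof. by apply: sumr_ge0 => pi _; apply: weight_ge0. Qed.

Lemma Sw_ge0 m (p : 'S_m) : 0 <= Sw p.
Proof. by rewrite divr_ge0 ?Dw_ge0 // sumr_ge0 // => pi _; apply: weight_ge0. Qed.

Lemma Sbar_f_ge0 f m (p : 'S_m) : 0 <= Sbar_f f p.
Proof. by case: f => [|f] /=; rewrite le_max Sw_ge0. Qed.

Lemma Dw1_gt0 m : (m <= N)%N -> 0 < D (1 : 'S_m)%g.
Proof.
move=> hmN; rewrite /Dw (bigD1 1%g) ?contains1 //=.
apply: ltr_wpDr; last exact: exprn_gt0.
by apply: sumr_ge0 => pi _; apply: weight_ge0.
Qed.

Lemma Sbar_fE m (p : 'S_m) : (m < N)%N -> Sbar_f (N - m) p = Num.max (Sw p) (Sc p).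
Proof. by move=> hmN; rewrite -(subnSK hmN) /= /Defs.Sc hmN. Qed.

Lemma negative_size_lt m (p : 'S_m) : negative N c theta p -> (m < N)%N.
Proof. by rewrite /negative /Defs.Sc; case: ifP => // _; rewrite ltNge Sw_ge0. Qed.

Section IncreasingPrefix.
Variable K : nat.
Hypothesis K_lt_N : (K.+2 < N)%N.

Local Notation e := (1 : 'S_K.+2)%g.
Local Notation e' := (1 : 'S_K.+1)%g.
Local Notation T := (\sum_(q : 'S_K.+2 | penult_max q) theta ^+ c q).

Lemma penult_weight_gt0 : 0 < T.
Proof.
rewrite (bigD1 _ (penult_max_tperm K)) /=.
apply: ltr_wpDr; last exact: exprn_gt0.
by apply: sumr_ge0 => q _; apply: weight_ge0.
Qed.

Lemma Dmax_le_penult : Dmax e' K <= \sum_(q : 'S_K.+2 | penult_max q) Dmax q K.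
Proof.
rewrite /Dmax [leRHS](exchange_big_dep (fun pi : 'S_N => pval pi K == N.-1)) /=;
  last by move=> q pi _ /andP[].
rewrite big_mkcond [leRHS]big_mkcond; apply: ler_sum => pi _.
case: ifP => [/andP[pi_e' pi_K]|_]; last first.
  by case: ifP => // _; apply: sumr_ge0 => q _; apply: weight_ge0.
rewrite pi_K; have [q pi_q] := pattern_exists pi (ltnW K_lt_N).
rewrite (bigD1 q) /=; last by rewrite (penult_max_pattern pi_e' (eqP pi_K) pi_q) pi_q.
by rewrite lerDl; apply: sumr_ge0 => q' _; apply: weight_ge0.
Qed.

Lemma win_bound : theta ^+ c e * Dmax e' K <= T * (D e * Sw e).
Proof.
have De_gt0 := Dw1_gt0 (ltnW K_lt_N).
rewrite Sw_Dmax [D e * _]mulrC divfK ?lt0r_neq0 //.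
apply: le_trans (ler_wpM2l (weight_ge0 _) Dmax_le_penult) _.
rewrite mulr_sumr mulr_suml; apply: ler_sum => q /andP[_ /eqP q_K].
rewrite -{1}(sigma1 q) Dmax_sigma ?(ltnW K_lt_N) //; last exact: incr_prefix1.
by rewrite /sigma_pos ltnS leqnSn q_K.
Qed.

Lemma cont_bound :
  T * (D e * Sc e) <=
  theta ^+ c e * \sum_(q : 'S_K.+2 | contains q e') D q * Sbar_f (N - K.+2) q.
Proof.
have -> : T * (D e * Sc e) = theta ^+ c e * \sum_(q : 'S_K.+2 | penult_max q) D q * Sc q.
  rewrite mulr_suml mulr_sumr; apply: eq_bigr => q _.
  have Dq : theta ^+ c e * D q = theta ^+ c q * D e.
    by rewrite -{1}(sigma1 q) Dw_sigma ?(ltnW K_lt_N) //; apply: incr_prefix1.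
  have Scq : Sc q = Sc e.
    by rewrite -{1}(sigma1 q) Sc_sigma ?(ltnW K_lt_N) //; apply: incr_prefix1.
  by rewrite Scq !mulrA Dq.
apply: ler_wpM2l; first exact: weight_ge0.
rewrite big_mkcond [leRHS]big_mkcond; apply: ler_sum => q _.
rewrite /penult_max; case: (contains q e') => //=.
case: ifP => _; last by rewrite mulr_ge0 ?Dw_ge0 ?Sbar_f_ge0.
by rewrite ler_wpM2l ?Dw_ge0 // Sbar_fE // le_max lexx orbT.
Qed.

End IncreasingPrefix.

End Equivariance.

Theorem corollary3p7 (R : realFieldType) (N : nat)
  (c : forall m : nat, 'S_m -> nat) (theta : R) :
  prefix_equivariant N c -> (0 < theta)%R ->
  forall k : nat, (2 <= k)%N -> (k <= N)%N ->
  negative N c theta (1%g : 'S_k) -> negative N c theta (1%g : 'S_k.-1).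
Proof.
move=> c_equiv theta_gt0 [|[|K]] // _ _ neg_e.
have K_lt_N := negative_size_lt theta_gt0 neg_e.
have De'_gt0 := Dw1_gt0 c theta_gt0 (ltnW (ltnW K_lt_N)).
rewrite /negative /Sc (ltnW K_lt_N) Sw_Dmax ltr_pM2r ?invr_gt0 //.
rewrite -(ltr_pM2l (exprn_gt0 (c _ (1 : 'S_K.+2)%g) theta_gt0)).
apply: le_lt_trans (win_bound c_equiv theta_gt0 K_lt_N) _.
apply: lt_le_trans (cont_bound c_equiv theta_gt0 K_lt_N).
rewrite ltr_pM2l ?penult_weight_gt0 // ltr_pM2l ?Dw1_gt0 ?(ltnW K_lt_N) //.
Qed.
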